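(* Let $L\in\mathbb{R}^{n\times n}$ be a real symmetric positive semidefinite matrix, let $U_k\in\mathbb{R}^{n\times k}$ have orthonormal columns that are eigenvectors of $L$, and let $\mathrm{span}(U_k)$ denote its column space. Let $\beta>0$, let $\mathrm{E},\mathrm{E}_{\text{model}}\in\mathbb{R}$, and set $a=\mathrm{E}-\mathrm{E}_{\text{model}}$. For $\phi,\rho\in\mathbb{R}^n$ define \[ \mathcal{L}(\phi,\rho)=\beta\,\|L\phi-\rho\|_2^2+\Big(a+\tfrac12\,\phi^\top\rho\Big)^2 . \] Fix $\phi\in\mathrm{span}(U_k)$. Then the unique minimizer of $\rho\mapsto\mathcal{L}(\phi,\rho)$ over $\mathrm{span}(U_k)$ is \[ \rho^\star(\phi)=L\phi-t^\star(\phi)\,\phi,\qquad t^\star(\phi)=\frac{a+\frac12\,\phi^\top L\phi}{2\beta+\frac12\,\|\phi\|_2^2}. \]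
   Context: $\mathcal{L}$ is the (squared, $L^2$) surrogate training objective combining a Poisson-equation residual $\|L\phi-\rho\|^2$ weighted by $\beta$ with a squared energy term involving the electrostatic energy $\frac12\phi^\top\rho$; $\phi$ plays the role of a potential and $\rho$ of charges on the nodes of a graph with Laplacian $L$. *)

From HB Require Import structures.
From mathcomp Require Import all_boot all_order all_algebra.
From mathcomp Require Import all_reals.
Set Implicit Arguments. Unset Strict Implicit. Unset Printing Implicit Defensive.
Import Order.TTheory GRing.Theory Num.Theory.
Local Open Scope ring_scope.

Definition dotv (R : realType) (n : nat) (u v : 'cV[R]_n) : R :=
  \sum_(i < n) u i 0 * v i 0.

Definition sqnorm (R : realType) (n : nat) (v : 'cV[R]_n) : R := dotv v v.

Definition symmetric_mx (R : realType) (n : nat) (L : 'M[R]_n) : Prop := L^T = L.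

Definition psd_mx (R : realType) (n : nat) (L : 'M[R]_n) : Prop :=
  forall x : 'cV[R]_n, 0 <= dotv x (L *m x).

Definition orthonormal_cols (R : realType) (n k : nat) (U : 'M[R]_(n, k)) : Prop :=
  U^T *m U = 1%:M.

Definition eigvec_cols (R : realType) (n k : nat) (L : 'M[R]_n) (U : 'M[R]_(n, k))
  : Prop :=
  forall j : 'I_k, exists lam : R, L *m col j U = lam *: col j U.

Definition in_span (R : realType) (n k : nat) (U : 'M[R]_(n, k)) (x : 'cV[R]_n)
  : Prop := exists c : 'cV[R]_k, x = U *m c.

Definition lossL (R : realType) (n : nat) (L : 'M[R]_n) (beta a : R)
  (phi rho : 'cV[R]_n) : R :=
  beta * sqnorm (L *m phi - rho) + (a + 2^-1 * dotv phi rho) ^+ 2.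

Definition tstar (R : realType) (n : nat) (L : 'M[R]_n) (beta a : R)
  (phi : 'cV[R]_n) : R :=
  (a + 2^-1 * dotv phi (L *m phi)) / (2 * beta + 2^-1 * sqnorm phi).

Definition rhostar (R : realType) (n : nat) (L : 'M[R]_n) (beta a : R)
  (phi : 'cV[R]_n) : 'cV[R]_n :=
  L *m phi - tstar L beta a phi *: phi.

(* The loss is a quadratic function of rho with Hessian 2 beta I + phi phi^T / 2,
   positive definite for beta > 0, and rho* is exactly its critical point: the
   defining equation t* (2 beta + |phi|^2/2) = a + phi^T L phi / 2 cancels the
   linear term, so that for every rho in R^n, with d = rho - rho*,
     loss(rho) = loss(rho* ) + beta |d|^2 + (phi^T d / 2)^2.
   Hence rho* is the unique global minimiser, and it lies in span(U) because
   span(U) is an L-invariant subspace containing phi. *)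
From HB Require Import structures.
From mathcomp Require Import all_boot all_order all_algebra.
From mathcomp Require Import all_reals.
From mathcomp Require Import ring.
Import Order.TTheory GRing.Theory Num.Theory.
Local Open Scope ring_scope.

Section DotProduct.
Variables (R : realType) (n : nat).
Implicit Types u v w : 'cV[R]_n.

Lemma dotvC u v : dotv u v = dotv v u.
Proof. by apply: eq_bigr => i _; rewrite mulrC. Qed.

Lemma dotvDr u v w : dotv u (v + w) = dotv u v + dotv u w.
Proof. by rewrite /dotv -big_split; apply: eq_bigr => i _; rewrite mxE mulrDr. Qed.

Lemma dotvNr u v : dotv u (- v) = - dotv u v.
Proof. by rewrite /dotv -sumrN; apply: eq_bigr => i _; rewrite mxE mulrN. Qed.

Lemma dotvZr u v c : dotv u (c *: v) = c * dotv u v.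
Proof. by rewrite /dotv mulr_sumr; apply: eq_bigr => i _; rewrite mxE mulrCA. Qed.

Lemma dotvDl u v w : dotv (v + w) u = dotv v u + dotv w u.
Proof. by rewrite dotvC dotvDr !(dotvC u). Qed.

Lemma dotvNl u v : dotv (- v) u = - dotv v u.
Proof. by rewrite dotvC dotvNr dotvC. Qed.

Lemma dotvZl u v c : dotv (c *: v) u = c * dotv v u.
Proof. by rewrite dotvC dotvZr dotvC. Qed.

Lemma sqnorm_ge0 u : 0 <= sqnorm u.
Proof. by apply: sumr_ge0 => i _; rewrite -expr2 sqr_ge0. Qed.

Lemma sqnorm_eq0 u : sqnorm u = 0 -> u = 0.
Proof.
move=> /eqP; rewrite psumr_eq0 => [/allP u0|i _]; last by rewrite -expr2 sqr_ge0.
apply/matrixP => i j; rewrite ord1 mxE.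
by have /= := u0 i (mem_index_enum _); rewrite mulf_eq0 orbb => /eqP.
Qed.

End DotProduct.

Arguments dotvC {R n}.

Section ColumnSpan.
Variables (R : realType) (n k : nat) (U : 'M[R]_(n, k)).
Implicit Types x y : 'cV[R]_n.

Lemma in_span0 : in_span U 0.
Proof. by exists 0; rewrite mulmx0. Qed.

Lemma in_spanD x y : in_span U x -> in_span U y -> in_span U (x + y).
Proof. by move=> [cx ->] [cy ->]; exists (cx + cy); rewrite mulmxDr. Qed.

Lemma in_spanB x y : in_span U x -> in_span U y -> in_span U (x - y).
Proof. by move=> [cx ->] [cy ->]; exists (cx - cy); rewrite mulmxBr. Qed.

Lemma in_spanZ s x : in_span U x -> in_span U (s *: x).
Proof. by move=> [cx ->]; exists (s *: cx); rewrite scalemxAr. Qed.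

Lemma in_span_sum (I : Type) (r : seq I) (P : pred I) (F : I -> 'cV[R]_n) :
  (forall i, P i -> in_span U (F i)) -> in_span U (\sum_(i <- r | P i) F i).
Proof. by move=> FP; apply: big_ind => //; [exact: in_span0 | exact: in_spanD]. Qed.

Lemma in_span_col j : in_span U (col j U).
Proof. by exists (delta_mx j 0); rewrite -colE. Qed.

Lemma mulmx_sum_col (c : 'cV[R]_k) : U *m c = \sum_j c j 0 *: col j U.
Proof.
apply/matrixP => i j; rewrite ord1 !mxE summxE.
by apply: eq_bigr => l _; rewrite !mxE mulrC.
Qed.

Lemma in_span_mulmx (L : 'M[R]_n) x :
  eigvec_cols L U -> in_span U x -> in_span U (L *m x).
Proof.
move=> eigLU [c ->]; rewrite mulmx_sum_col mulmx_sumr.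
apply: in_span_sum => j _; rewrite -scalemxAr; apply: in_spanZ.
by have [lam ->] := eigLU j; apply/in_spanZ/in_span_col.
Qed.

End ColumnSpan.

Section SurrogateLoss.
Variables (R : realType) (n : nat) (L : 'M[R]_n) (beta a : R) (phi : 'cV[R]_n).

Local Notation loss := (lossL L beta a phi).
Local Notation rho_star := (rhostar L beta a phi).

Lemma tstarP : 2 * beta + 2^-1 * sqnorm phi != 0 ->
  tstar L beta a phi * (2 * beta + 2^-1 * sqnorm phi) =
  a + 2^-1 * dotv phi (L *m phi).
Proof. by move=> den_neq0; rewrite mulrVK // unitfE. Qed.

Lemma lossL_rhostar_expand rho : 2 * beta + 2^-1 * sqnorm phi != 0 ->
  loss rho = loss rho_star + beta * sqnorm (rho - rho_star)
                           + (2^-1 * dotv phi (rho - rho_star)) ^+ 2.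
Proof.
move=> /tstarP; rewrite /lossL /rhostar /sqnorm.
set t := tstar L beta a phi; set w := L *m phi => tP.
rewrite !(dotvDr, dotvNr, dotvZr, dotvDl, dotvNl, dotvZl) !opprD !opprK.
rewrite (dotvC rho w) (dotvC rho phi) (dotvC w phi).
have -> : a = t * (2 * beta + 2^-1 * dotv phi phi) - 2^-1 * dotv phi w.
  by rewrite tP; ring.
by field.
Qed.

Hypothesis beta_gt0 : 0 < beta.

Lemma loss_denom_gt0 : 0 < 2 * beta + 2^-1 * sqnorm phi.
Proof.
by rewrite ltr_pwDl ?mulr_gt0 ?mulr_ge0 ?invr_ge0 ?sqnorm_ge0.
Qed.

Lemma lossL_rhostar_le rho : loss rho_star <= loss rho.
Proof.
rewrite (lossL_rhostar_expand rho (lt0r_neq0 loss_denom_gt0)) -addrA lerDl.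
by rewrite addr_ge0 ?sqr_ge0 ?mulr_ge0 ?sqnorm_ge0 ?ltW.
Qed.

Lemma lossL_eq_rhostar rho : loss rho = loss rho_star -> rho = rho_star.
Proof.
rewrite {1}(lossL_rhostar_expand rho (lt0r_neq0 loss_denom_gt0)) -addrA.
move=> /eqP; rewrite -subr_eq0 addrC addrK.
rewrite paddr_eq0 ?sqr_ge0 ?mulr_ge0 ?sqnorm_ge0 ?ltW //.
case/andP; rewrite mulf_eq0 gt_eqF // => /eqP /sqnorm_eq0 /eqP + _.
by rewrite subr_eq0 => /eqP.
Qed.

End SurrogateLoss.

Lemma in_span_rhostar (R : realType) (n k : nat) (L : 'M[R]_n)
    (U : 'M[R]_(n, k)) (beta a : R) (phi : 'cV[R]_n) :
  eigvec_cols L U -> in_span U phi -> in_span U (rhostar L beta a phi).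
Proof.
move=> eigLU phiU.
by apply: in_spanB; [exact: in_span_mulmx | exact: in_spanZ].
Qed.

Theorem theorem1 (R : realType) (n k : nat) (L : 'M[R]_n) (U : 'M[R]_(n, k))
  (beta E Emodel : R) (phi : 'cV[R]_n) :
  symmetric_mx L -> psd_mx L ->
  orthonormal_cols U -> eigvec_cols L U ->
  0 < beta ->
  in_span U phi ->
  let a := E - Emodel in
  in_span U (rhostar L beta a phi) /\
  (forall rho : 'cV[R]_n, in_span U rho ->
     lossL L beta a phi (rhostar L beta a phi) <= lossL L beta a phi rho) /\
  (forall rho : 'cV[R]_n, in_span U rho ->
     lossL L beta a phi rho = lossL L beta a phi (rhostar L beta a phi) ->
     rho = rhostar L beta a phi).
Proof.
move=> _ _ _ eigLU beta_gt0 phiU a; split; first exact: in_span_rhostar.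
split=> rho _; first exact: lossL_rhostar_le.
exact: lossL_eq_rhostar.
Qed.
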